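(* The sequential specification $\mathsf{Mutex}$, defined by the ordered rules $R_0, R_{Lock}, R_{LU}$, is step-by-step linearizable: for every differentiated history $h$, every data value $x$, and every $i\in\{1,2,3\}$ with $(R_1,R_2,R_3)=(R_0,R_{Lock},R_{LU})$, if $h\sqsubseteq u$ for some $u\in M_x(R_i)$ and $h\setminus x\sqsubseteq[\![R_1,\dots,R_i]\!]$, then $h\sqsubseteq[\![R_1,\dots,R_i]\!]$.
   Context: Data values are natural numbers. Operations (resp. method events) are pairs of a method in $\{Lock, Unlock\}$ and a data value (a ghost parameter relating an $Unlock$ to its $Lock$). A history $h$ is a finite set of operations with a strict partial order $<_{hb}$ (happens-before) that is an interval order. A sequential execution is a finite sequence of method events. $h$ is differentiated if each data value is carried by at most one $Lock$ operation. $h\sqsubseteq u$ means there is a bijection between operations of $h$ and positions of $u$ preserving method and data value such that $o_1<_{hb}o_2$ implies the image of $o_1$ precedes that of $o_2$; $h\sqsubseteq S$ means $h\sqsubseteq u$ for some $u\in S$. $h\setminus x$ removes all operations with data value $x$. Rules: $R_0$: $\epsilon\in\mathsf{Mutex}$; $R_{Lock}$: $Lock(x)\in\mathsf{Mutex}$; $R_{LU}$: $u\in\mathsf{Mutex}\Rightarrow Lock(x)\cdot Unlock(x)\cdot u\in\mathsf{Mutex}$ ($x$ not in $u$). $[\![R_1,\dots,R_i]\!]$ is the smallest set of sequences closed under the listed rules. Matching sets with witness $x$: $M_x(R_0)=\{\epsilon\}$, $M_x(R_{Lock})=\{Lock(x)\}$, $M_x(R_{LU})$ = sequences $Lock(x)\cdot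 Unlock(x)\cdot u$ with $x$ not occurring in $u$. *)

From Stdlib Require Import List Arith.
Import ListNotations.

Inductive method : Set := Lock | Unlock.

Definition event : Set := (method * nat)%type.

(* A history: a finite set of operation identifiers [hops] (a duplicate-free
   list of nats), a labelling of each identifier by a method event, and the
   happens-before relation [hb] (only its restriction to [hops] matters). *)
Record history : Type := mkHistory {
  hops : list nat;
  hlab : nat -> event;
  hb : nat -> nat -> Prop
}.

(* Well-formedness: hb is a strict partial order on hops which is an
   interval order. *)
Definition is_history (h : history) : Prop :=
  NoDup (hops h) /\
  (forall o, In o (hops h) -> ~ hb h o o) /\
  (forall o1 o2 o3, In o1 (hops h) -> In o2 (hops h) -> In o3 (hops h) ->
     hb h o1 o2 -> hb h o2 o3 -> hb h o1 o3) /\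
  (forall a b c d, In a (hops h) -> In b (hops h) -> In c (hops h) ->
     In d (hops h) -> hb h a b -> hb h c d -> hb h a d \/ hb h c b).

Definition differentiated (h : history) : Prop :=
  forall o1 o2 v, In o1 (hops h) -> In o2 (hops h) ->
    hlab h o1 = (Lock, v) -> hlab h o2 = (Lock, v) -> o1 = o2.

Definition hremove (h : history) (x : nat) : history :=
  mkHistory (filter (fun o => negb (Nat.eqb (snd (hlab h o)) x)) (hops h))
            (hlab h) (hb h).

Definition hle (h : history) (u : list event) : Prop :=
  exists f : nat -> nat,
    length (hops h) = length u /\
    (forall o, In o (hops h) -> f o < length u /\ nth (f o) u (Lock, 0) = hlab h o) /\
    (forall o1 o2, In o1 (hops h) -> In o2 (hops h) -> f o1 = f o2 -> o1 = o2) /\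
    (forall o1 o2, In o1 (hops h) -> In o2 (hops h) -> hb h o1 o2 -> f o1 < f o2).

Definition hle_set (h : history) (S : list event -> Prop) : Prop :=
  exists u, S u /\ hle h u.

Definition not_occurs (x : nat) (u : list event) : Prop :=
  forall e, In e u -> snd e <> x.

(* [[R_1, ..., R_i]] with (R_1,R_2,R_3) = (R_0, R_Lock, R_LU):
   the smallest set closed under the first i rules. *)
Inductive mutex_upto (i : nat) : list event -> Prop :=
| rule_R0 : 1 <= i -> mutex_upto i []
| rule_RLock : forall x, 2 <= i -> mutex_upto i [(Lock, x)]
| rule_RLU : forall x u, 3 <= i -> mutex_upto i u -> not_occurs x u ->
    mutex_upto i ((Lock, x) :: (Unlock, x) :: u).

Definition matching (i : nat) (x : nat) (u : list event) : Prop :=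
  match i with
  | 1 => u = []
  | 2 => u = [(Lock, x)]
  | 3 => exists u', u = (Lock, x) :: (Unlock, x) :: u' /\ not_occurs x u'
  | _ => False
  end.

(* Every operation carrying x sits in the prefix Lock(x)·Unlock(x) of the given
   linearization u (since x does not occur in the rest of u), and every other
   operation sits in the suffix.  Hence one may keep the positions of the
   x-operations and replace the suffix by a linearization v of h \ x; v does
   not mention x, so Lock(x)·Unlock(x)·v is produced by R_LU from v.  For the
   rules R_0 and R_Lock the matching sequence itself already belongs to the
   specification. *)

From Stdlib Require Import List Arith Lia.
Import ListNotations.

Lemma NoDup_inj_on_length_le (l S : list nat) (f : nat -> nat) :
  NoDup l -> (forall a b, In a l -> In b l -> f a = f b -> a = b) ->
  (forall a, In a l -> In (f a) S) -> length l <= length S.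
Proof.
  intros Hnd Hinj HS. rewrite <- (length_map f l).
  apply NoDup_incl_length.
  - apply NoDup_map_NoDup_ForallPairs; [|exact Hnd]. intros a b Ha Hb. now apply Hinj.
  - intros y Hy. apply in_map_iff in Hy. destruct Hy as [a [<- Ha]]. now apply HS.
Qed.

Lemma NoDup_inj_on_surj (l : list nat) (f : nat -> nat) (n : nat) :
  NoDup l -> length l = n ->
  (forall a, In a l -> f a < n) ->
  (forall a b, In a l -> In b l -> f a = f b -> a = b) ->
  forall k, k < n -> exists a, In a l /\ f a = k.
Proof.
  intros Hnd Hlen Hlt Hinj k Hk.
  assert (Hincl : incl (seq 0 n) (map f l)).
  { apply NoDup_length_incl.
    - apply NoDup_map_NoDup_ForallPairs; [|exact Hnd]. intros a b Ha Hb. now apply Hinj.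
    - rewrite length_map, length_seq; lia.
    - intros y Hy. apply in_map_iff in Hy. destruct Hy as [a [<- Ha]].
      apply in_seq. specialize (Hlt a Ha). lia. }
  assert (Hkf : In k (map f l)) by (apply Hincl, in_seq; lia).
  apply in_map_iff in Hkf. destruct Hkf as [a [Ha1 Ha2]]. now exists a.
Qed.

Lemma hle_labels_cover (h : history) (u : list event) :
  NoDup (hops h) -> hle h u ->
  forall e, In e u -> exists o, In o (hops h) /\ hlab h o = e.
Proof.
  intros Hnd [f [Hlen [Hlab [Hinj _]]]] e He.
  destruct (In_nth u e (Lock, 0) He) as [k [Hk Hke]].
  destruct (NoDup_inj_on_surj (hops h) f (length u) Hnd Hlen
              (fun o Ho => proj1 (Hlab o Ho)) Hinj k Hk) as [o [Ho Hfo]].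
  exists o. split; [exact Ho|].
  rewrite <- Hke, <- Hfo. symmetry. apply Hlab, Ho.
Qed.

Lemma In_hremove (h : history) (x o : nat) :
  In o (hops (hremove h x)) <-> In o (hops h) /\ snd (hlab h o) <> x.
Proof.
  simpl. rewrite filter_In, Bool.negb_true_iff, Nat.eqb_neq. reflexivity.
Qed.

Lemma hle_hremove_not_occurs (h : history) (x : nat) (v : list event) :
  NoDup (hops h) -> hle (hremove h x) v -> not_occurs x v.
Proof.
  intros Hnd Hle e He.
  destruct (hle_labels_cover (hremove h x) v (NoDup_filter _ Hnd) Hle e He)
    as [o [Ho <-]].
  apply In_hremove in Ho. exact (proj2 Ho).
Qed.

Section ReplaceSuffix.

Variables (h : history) (x : nat) (p s : list event) (f : nat -> nat).
Hypothesis nodup_h : NoDup (hops h).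
Hypothesis prefix_x : forall e, In e p -> snd e = x.
Hypothesis suffix_not_x : not_occurs x s.
Hypothesis f_length : length (hops h) = length (p ++ s).
Hypothesis f_label : forall o, In o (hops h) ->
  f o < length (p ++ s) /\ nth (f o) (p ++ s) (Lock, 0) = hlab h o.
Hypothesis f_inj : forall o1 o2, In o1 (hops h) -> In o2 (hops h) ->
  f o1 = f o2 -> o1 = o2.
Hypothesis f_hb : forall o1 o2, In o1 (hops h) -> In o2 (hops h) ->
  hb h o1 o2 -> f o1 < f o2.

Lemma embed_prefix_iff o :
  In o (hops h) -> f o < length p <-> snd (hlab h o) = x.
Proof.
  intros Ho. destruct (f_label o Ho) as [Hlt Hnth].
  rewrite length_app in Hlt. split.
  - intros Hp. rewrite <- Hnth, app_nth1 by exact Hp.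
    apply prefix_x, nth_In, Hp.
  - intros Hx. destruct (Nat.lt_ge_cases (f o) (length p)) as [|Hge]; [assumption|].
    exfalso. rewrite app_nth2 in Hnth by exact Hge.
    apply (suffix_not_x (nth (f o - length p) s (Lock, 0))); [apply nth_In; lia|].
    now rewrite Hnth.
Qed.

Lemma count_x_ops :
  length (filter (fun o => Nat.eqb (snd (hlab h o)) x) (hops h)) = length p.
Proof.
  assert (Hxs : length (filter (fun o => Nat.eqb (snd (hlab h o)) x) (hops h))
                <= length (seq 0 (length p))).
  { apply (NoDup_inj_on_length_le _ _ f (NoDup_filter _ nodup_h)).
    - intros a b Ha Hb. apply filter_In in Ha, Hb. apply f_inj; tauto.
    - intros a Ha. apply filter_In in Ha. destruct Ha as [Ha Hx].
      apply Nat.eqb_eq, (embed_prefix_iff a Ha) in Hx. apply in_seq. lia. }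
  assert (Hrest : length (hops (hremove h x)) <= length (seq (length p) (length s))).
  { apply (NoDup_inj_on_length_le _ _ f (NoDup_filter _ nodup_h)).
    - intros a b Ha Hb. apply In_hremove in Ha, Hb. apply f_inj; tauto.
    - intros a Ha. apply In_hremove in Ha. destruct Ha as [Ha Hx].
      rewrite <- (embed_prefix_iff a Ha) in Hx.
      pose proof (proj1 (f_label a Ha)) as Hlt. rewrite length_app in Hlt.
      apply in_seq. lia. }
  pose proof (filter_length (fun o => Nat.eqb (snd (hlab h o)) x) (hops h)).
  pose proof f_length as Hlen. rewrite length_app in Hlen.
  rewrite length_seq in Hxs, Hrest. simpl in Hrest. lia.
Qed.

Lemma hle_replace_suffix (t : list event) :
  hle (hremove h x) t -> hle h (p ++ t).
Proof.
  intros [g [Hlen [Hlab [Hinj Hhb]]]].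
  pose proof count_x_ops as Hcount.
  pose proof (filter_length (fun o => Nat.eqb (snd (hlab h o)) x) (hops h)) as Hsplit.
  simpl in Hlen.
  exists (fun o => if Nat.eqb (snd (hlab h o)) x then f o else length p + g o).
  split; [|split; [|split]].
  - rewrite length_app. lia.
  - intros o Ho. destruct (Nat.eqb_spec (snd (hlab h o)) x) as [Hx | Hx].
    + apply (embed_prefix_iff o Ho) in Hx.
      destruct (f_label o Ho) as [_ Hnth]. rewrite app_nth1 in Hnth |- * by exact Hx.
      rewrite length_app. split; [lia | exact Hnth].
    + destruct (Hlab o (proj2 (In_hremove h x o) (conj Ho Hx))) as [Hlt Hnth].
      rewrite length_app, app_nth2, Nat.add_comm, Nat.add_sub by lia.
      split; [lia | exact Hnth].
  - intros o1 o2 H1 H2.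
    pose proof (embed_prefix_iff o1 H1). pose proof (embed_prefix_iff o2 H2).
    destruct (Nat.eqb_spec (snd (hlab h o1)) x), (Nat.eqb_spec (snd (hlab h o2)) x); intros Heq.
    + now apply f_inj.
    + assert (f o1 < length p) by tauto. lia.
    + assert (f o2 < length p) by tauto. lia.
    + apply Hinj; [apply In_hremove; auto .. | lia].
  - intros o1 o2 H1 H2 Hb.
    pose proof (embed_prefix_iff o1 H1). pose proof (embed_prefix_iff o2 H2).
    destruct (Nat.eqb_spec (snd (hlab h o1)) x), (Nat.eqb_spec (snd (hlab h o2)) x).
    + now apply f_hb.
    + assert (f o1 < length p) by tauto. lia.
    + exfalso. pose proof (f_hb o1 o2 H1 H2 Hb). subst. intuition lia.
    + specialize (Hhb o1 o2 ltac:(apply In_hremove; auto) ltac:(apply In_hremove; auto) Hb). lia.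
Qed.

End ReplaceSuffix.

Theorem mainTheorem3 :
  forall (h : history) (x i : nat),
    is_history h -> differentiated h ->
    1 <= i <= 3 ->
    (exists u, matching i x u /\ hle h u) ->
    hle_set (hremove h x) (mutex_upto i) ->
    hle_set h (mutex_upto i).
Proof.
  intros h x i [Hnd _] _ Hi [u [Hm Hle]] [v [Hv Hlev]].
  destruct i as [|[|[|[|i]]]]; simpl in Hm; try lia.
  - exists u. subst u. split; [constructor; lia | exact Hle].
  - exists u. subst u. split; [constructor; lia | exact Hle].
  - destruct Hm as [s [-> Hs]].
    exists ((Lock, x) :: (Unlock, x) :: v). split.
    + constructor; [lia | exact Hv | exact (hle_hremove_not_occurs h x v Hnd Hlev)].
    + destruct Hle as [f [Hlen [Hlab [Hinj Hhb]]]].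
      assert (Hprefix : forall e, In e [(Lock, x); (Unlock, x)] -> snd e = x)
        by (simpl; intros e [<- | [<- | []]]; reflexivity).
      exact (hle_replace_suffix h x [(Lock, x); (Unlock, x)] s f
               Hnd Hprefix Hs Hlen Hlab Hinj Hhb v Hlev).
Qed.
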